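(* Let $\mathbf{S}$ be any one of the four systems $\mathbf{G3N}$, $\mathbf{G3NeF}$, $\mathbf{G3CoPC}$, $\mathbf{G3MPC}$. The cut rule ''from $\Gamma\Rightarrow\alpha$ and $\Delta,\alpha\Rightarrow\varphi$ infer $\Gamma,\Delta\Rightarrow\varphi$'' is admissible in $\mathbf{S}$: for all finite multisets $\Gamma,\Delta$ and formulas $\alpha,\varphi$, if $\Gamma\Rightarrow\alpha$ and $\Delta,\alpha\Rightarrow\varphi$ are derivable in $\mathbf{S}$, then $\Gamma,\Delta\Rightarrow\varphi$ is derivable in $\mathbf{S}$.
   Context: Formulas are generated from a countable set of propositional variables $p,q,\dots$ and the constant $\top$ by the grammar $\varphi::= p\mid\top\mid\varphi\wedge\varphi\mid\varphi\vee\varphi\mid\varphi\to\varphi\mid\neg\varphi$ (there is no constant $\bot$). $\varphi\leftrightarrow\psi$ abbreviates $(\varphi\to\psi)\wedge(\psi\to\varphi)$. A sequent is an expression $\Gamma\Rightarrow\varphi$ where $\Gamma$ is a finite multiset of formulas and $\varphi$ is a formula (the goal); $\Gamma,\Delta$ denotes multiset union and $\Gamma,\alpha$ denotes $\Gamma$ with one more occurrence of $\alpha$. Rules ($p$ a propositional variable): (ax) $\Gamma,p\Rightarrow p$ (no premises); ($\top$) $\Gamma\Rightarrow\top$ (no premises); ($\to$r) from $\Gamma,\alpha\Rightarrow\beta$ infer $\Gamma\Rightarrow\alpha\to\beta$; ($\to$l) from $\Gamma,\alpha\to\beta\Rightarrow\alpha$ and $\Gamma,\beta\Rightarrow\varphi$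 infer $\Gamma,\alpha\to\beta\Rightarrow\varphi$; ($\wedge$r) from $\Gamma\Rightarrow\alpha$ and $\Gamma\Rightarrow\beta$ infer $\Gamma\Rightarrow\alpha\wedge\beta$; ($\wedge$l) from $\Gamma,\alpha,\beta\Rightarrow\varphi$ infer $\Gamma,\alpha\wedge\beta\Rightarrow\varphi$; ($\vee$r$_1$), ($\vee$r$_2$) from $\Gamma\Rightarrow\alpha$ (resp. $\Gamma\Rightarrow\beta$) infer $\Gamma\Rightarrow\alpha\vee\beta$; ($\vee$l) from $\Gamma,\alpha\Rightarrow\varphi$ and $\Gamma,\beta\Rightarrow\varphi$ infer $\Gamma,\alpha\vee\beta\Rightarrow\varphi$; (n) from $\Gamma,\neg\alpha,\beta\Rightarrow\alpha$ and $\Gamma,\neg\alpha,\alpha\Rightarrow\beta$ infer $\Gamma,\neg\alpha\Rightarrow\neg\beta$; (nef) from $\Gamma,\neg\alpha\Rightarrow\alpha$ infer $\Gamma,\neg\alpha\Rightarrow\neg\beta$; (copc) from $\Gamma,\neg\alpha,\beta\Rightarrow\alpha$ infer $\Gamma,\neg\alpha\Rightarrow\neg\beta$; (an) from $\Gamma,\alpha\Rightarrow\neg\alpha$ infer $\Gamma\Rightarrow\neg\alpha$. The rules (ax) through ($\vee$l) are the positive rules. The four systems are: $\mathbf{G3N}$ = positive rules + (n); $\mathbf{G3NeF}$ = positive rules + (n) + (nef); $\mathbf{G3CoPC}$ = positive rules + (copc); $\mathbf{G3MPC}$ = positive rules + (copc) + (an). None of them contains weakening, contraction or cut as a rule. A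 derivation is a finite tree of rule instances with leaves instances of (ax) or ($\top$); its height is the number of inference steps on a longest branch. A sequent is derivable if it has a derivation; a formula $\varphi$ is a theorem if $\Rightarrow\varphi$ (empty antecedent) is derivable. *)

(* Multisets of formulas are represented by lists considered
   up to permutation: derivability is closed under Permutation of the
   antecedent (a structural "rule" that is invisible at the multiset level). *)
From Stdlib Require Import List Permutation.
Import ListNotations.

Inductive form : Type :=
| Var : nat -> form
| Top : form
| And : form -> form -> form
| Or  : form -> form -> form
| Imp : form -> form -> form
| Neg : form -> form.

Inductive system : Type := G3N | G3NeF | G3CoPC | G3MPC.

Definition has_n (S : system) : bool :=
  match S with G3N | G3NeF => true | _ => false end.
Definition has_nef (S : system) : bool :=
  match S with G3NeF => true | _ => false end.
Definition has_copc (S : system) : bool :=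
  match S with G3CoPC | G3MPC => true | _ => false end.
Definition has_an (S : system) : bool :=
  match S with G3MPC => true | _ => false end.

Inductive derivable (S : system) : list form -> form -> Prop :=
| d_perm : forall G G' phi,
    Permutation G G' -> derivable S G phi -> derivable S G' phi
| d_ax : forall G p, derivable S (Var p :: G) (Var p)
| d_top : forall G, derivable S G Top
| d_impR : forall G a b,
    derivable S (a :: G) b -> derivable S G (Imp a b)
| d_impL : forall G a b phi,
    derivable S (Imp a b :: G) a -> derivable S (b :: G) phi ->
    derivable S (Imp a b :: G) phi
| d_andR : forall G a b,
    derivable S G a -> derivable S G b -> derivable S G (And a b)
| d_andL : forall G a b phi,
    derivable S (a :: b :: G) phi -> derivable S (And a b :: G) phi
| d_orR1 : forall G a b, derivable S G a -> derivable S G (Or a b)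
| d_orR2 : forall G a b, derivable S G b -> derivable S G (Or a b)
| d_orL : forall G a b phi,
    derivable S (a :: G) phi -> derivable S (b :: G) phi ->
    derivable S (Or a b :: G) phi
| d_n : forall G a b, has_n S = true ->
    derivable S (b :: Neg a :: G) a -> derivable S (a :: Neg a :: G) b ->
    derivable S (Neg a :: G) (Neg b)
| d_nef : forall G a b, has_nef S = true ->
    derivable S (Neg a :: G) a -> derivable S (Neg a :: G) (Neg b)
| d_copc : forall G a b, has_copc S = true ->
    derivable S (b :: Neg a :: G) a -> derivable S (Neg a :: G) (Neg b)
| d_an : forall G a, has_an S = true ->
    derivable S (a :: G) (Neg a) -> derivable S G (Neg a).

(* Antecedents are lists read up to permutation, and all structural facts are
   proved by induction on derivations (no height annotations are needed).
   - Weakening: appending formulas to the antecedent never disturbs a rule.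
   - Replacement principle: in a derivation of alpha :: D ⊢ phi the displayed
     occurrence of alpha may be replaced by any context Gamma, as long as this
     works for the rules in which that occurrence is principal; the other rules
     simply commute with the replacement.
   - Inversion of the left rules for ∧, ∨ and → is the replacement principle
     with Gamma := the components; contraction follows by induction on the
     contracted formula, and hence derivability only depends on the set of
     formulas of the antecedent.
   - Cut on alpha is proved by induction on alpha and, inside, on the
     derivation of the left premise Γ ⊢ alpha: left rules commute with the cut,
     the right rules for ∧ and ∨ meet the inverted right premise, and →r, the
     negation rules and ⊤ are treated by the replacement principle applied to
     the right premise, the principal cases being reduced to cuts on smaller
     formulas.  Mixed pairs of negation rules such as (n, copc) never occur,
     since no system contains both. *)
From Stdlib Require Import List Permutation Lia.
Import ListNotations.

Lemma form_eq_dec : forall x y : form, {x = y} + {x <> y}.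
Proof. decide equality; apply PeanoNat.Nat.eq_dec. Qed.

Ltac perm_solve :=
  let y := fresh "y" in
  apply (Permutation_count_occ form_eq_dec); intro y;
  repeat match goal with H : Permutation _ _ |- _ =>
    pose proof (proj1 (Permutation_count_occ form_eq_dec _ _) H y); clear H end;
  repeat (first [rewrite count_occ_app in * | progress simpl count_occ in *]);
  repeat match goal with
   | |- context [form_eq_dec ?a ?b] => destruct (form_eq_dec a b)
   | H : context [form_eq_dec ?a ?b] |- _ => destruct (form_eq_dec a b) end;
  lia.

Ltac incl_solve :=
  let y := fresh "y" in
  intros y; simpl; rewrite ?in_app_iff; simpl; rewrite ?in_app_iff; tauto.

Lemma perm_cons_cases (x y : form) (K D : list form) :
  Permutation (y :: K) (x :: D) ->
  (y = x /\ Permutation K D) \/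
  (exists K', Permutation K (x :: K') /\ Permutation D (y :: K')).
Proof.
  intros HP. destruct (form_eq_dec y x) as [-> | Hne].
  - left. split; [reflexivity | exact (Permutation_cons_inv HP)].
  - right. assert (Hin : In y (x :: D)) by (apply (Permutation_in _ HP); now left).
    destruct Hin as [-> | Hin]; [congruence |].
    apply in_split in Hin as [D1 [D2 ->]].
    exists (D1 ++ D2). split; perm_solve.
Qed.

Lemma perm_cons_double (x y : form) (K G : list form) :
  Permutation (y :: K) (x :: x :: G) ->
  (y = x /\ Permutation K (x :: G)) \/
  (exists K', Permutation K (x :: x :: K') /\ Permutation G (y :: K')).
Proof.
  intros HP. destruct (perm_cons_cases _ _ _ _ HP) as [[E HK] | [K1 [HK HG]]];
    [now left |].
  destruct (perm_cons_cases _ _ _ _ (Permutation_sym HG))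
    as [[-> HG'] | [K2 [HG' HK1]]].
  - left. split; [reflexivity | perm_solve].
  - right. exists K2. split; perm_solve.
Qed.

Section Structural.

Variable sys : system.

Local Notation "G ⊢ phi" := (derivable sys G phi) (at level 70, no associativity).

Ltac reorder L := apply (d_perm _ L); [perm_solve |].

(* Weakening by formulas appended at the end of the antecedent: every rule
   acts on the front of the antecedent, so each rule instance survives. *)
Lemma weakening_app (M : list form) : forall G phi, G ⊢ phi -> G ++ M ⊢ phi.
Proof.
  induction 1; simpl in *; try (econstructor; eassumption).
  apply (d_perm _ (G ++ M)); [apply Permutation_app_tail |]; assumption.
Qed.

(* Replacing an occurrence of alpha in the
   antecedent by the context Gamma preserves derivability, provided it does
   so for the last rule of any derivation in which that occurrence of alpha is
   principal; for those rules the hypotheses may use the replaced premises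
   (when alpha survives into the premise) or the original ones. *)
Section Replacement.

Variables (alpha : form) (Gamma : list form).

Hypothesis principal_ax : forall p D, alpha = Var p -> Gamma ++ D ⊢ Var p.
Hypothesis principal_impL : forall a b D phi, alpha = Imp a b ->
  Gamma ++ D ⊢ a -> b :: D ⊢ phi -> Gamma ++ D ⊢ phi.
Hypothesis principal_andL : forall a b D phi, alpha = And a b ->
  a :: b :: D ⊢ phi -> Gamma ++ D ⊢ phi.
Hypothesis principal_orL : forall a b D phi, alpha = Or a b ->
  a :: D ⊢ phi -> b :: D ⊢ phi -> Gamma ++ D ⊢ phi.
Hypothesis principal_n : forall a b D, has_n sys = true -> alpha = Neg a ->
  Gamma ++ b :: D ⊢ a -> Gamma ++ a :: D ⊢ b -> Gamma ++ D ⊢ Neg b.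
Hypothesis principal_nef : forall a b D, has_nef sys = true -> alpha = Neg a ->
  Gamma ++ D ⊢ a -> Gamma ++ D ⊢ Neg b.
Hypothesis principal_copc : forall a b D, has_copc sys = true -> alpha = Neg a ->
  b :: Neg a :: D ⊢ a -> Gamma ++ b :: D ⊢ a -> Gamma ++ D ⊢ Neg b.

Lemma replacement_perm :
  forall L phi, L ⊢ phi -> forall D, Permutation L (alpha :: D) -> Gamma ++ D ⊢ phi.
Proof.
  induction 1 as [G G' phi HG _ IH | G p | G | G a b _ IH
    | G a b phi _ IHa Hb IHb | G a b _ IHa _ IHb | G a b phi Hab IH
    | G a b _ IH | G a b _ IH | G a b phi Ha IHa Hb IHb
    | G a b Hn _ IHa _ IHb | G a b Hnef _ IH | G a b Hcopc Hb IH | G a Han _ IH];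
    intros D HD.
  - apply IH. now transitivity G'.
  - destruct (perm_cons_cases _ _ _ _ HD) as [[E _] | [K [_ HK]]].
    + now apply principal_ax.
    + reorder (Var p :: Gamma ++ K). apply d_ax.
  - apply d_top.
  - apply d_impR. reorder (Gamma ++ a :: D). apply IH. perm_solve.
  - destruct (perm_cons_cases _ _ _ _ HD) as [[E HG] | [K [HG HK]]].
    + apply (principal_impL a b); [congruence | apply IHa; perm_solve |].
      reorder (b :: G). exact Hb.
    + reorder (Imp a b :: Gamma ++ K). apply d_impL.
      * reorder (Gamma ++ Imp a b :: K). apply IHa. perm_solve.
      * reorder (Gamma ++ b :: K). apply IHb. perm_solve.
  - apply d_andR; [apply IHa | apply IHb]; exact HD.
  - destruct (perm_cons_cases _ _ _ _ HD) as [[E HG] | [K [HG HK]]].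
    + apply (principal_andL a b); [congruence |]. reorder (a :: b :: G). exact Hab.
    + reorder (And a b :: Gamma ++ K). apply d_andL.
      reorder (Gamma ++ a :: b :: K). apply IH. perm_solve.
  - apply d_orR1, IH, HD.
  - apply d_orR2, IH, HD.
  - destruct (perm_cons_cases _ _ _ _ HD) as [[E HG] | [K [HG HK]]].
    + apply (principal_orL a b); [congruence | reorder (a :: G) | reorder (b :: G)];
        assumption.
    + reorder (Or a b :: Gamma ++ K). apply d_orL.
      * reorder (Gamma ++ a :: K). apply IHa. perm_solve.
      * reorder (Gamma ++ b :: K). apply IHb. perm_solve.
  - destruct (perm_cons_cases _ _ _ _ HD) as [[E HG] | [K [HG HK]]].
    + apply (principal_n a b); [assumption | congruence | apply IHa | apply IHb];
        perm_solve.
    + reorder (Neg a :: Gamma ++ K). apply d_n; [assumption | |].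
      * reorder (Gamma ++ b :: Neg a :: K). apply IHa. perm_solve.
      * reorder (Gamma ++ a :: Neg a :: K). apply IHb. perm_solve.
  - destruct (perm_cons_cases _ _ _ _ HD) as [[E HG] | [K [HG HK]]].
    + apply (principal_nef a b); [assumption | congruence | apply IH; perm_solve].
    + reorder (Neg a :: Gamma ++ K). apply d_nef; [assumption |].
      reorder (Gamma ++ Neg a :: K). apply IH. perm_solve.
  - destruct (perm_cons_cases _ _ _ _ HD) as [[E HG] | [K [HG HK]]].
    + apply (principal_copc a b); [assumption | congruence | | apply IH; perm_solve].
      reorder (b :: Neg a :: G). exact Hb.
    + reorder (Neg a :: Gamma ++ K). apply d_copc; [assumption |].
      reorder (Gamma ++ b :: Neg a :: K). apply IH. perm_solve.
  - apply d_an; [assumption |]. reorder (Gamma ++ a :: D). apply IH. perm_solve.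
Qed.

Lemma replacement (D : list form) (phi : form) : alpha :: D ⊢ phi -> Gamma ++ D ⊢ phi.
Proof. intros H. exact (replacement_perm _ _ H D (Permutation_refl _)). Qed.

End Replacement.

(* The left premise of the left rule for x that keeps the succedent has
   antecedent Rs ++ D: both components for ∧, either one for ∨, and the
   consequent for →. *)
Definition decomposes (x : form) (Rs : list form) : Prop :=
  match x with
  | And a b => Rs = [a; b]
  | Or a b => Rs = [a] \/ Rs = [b]
  | Imp _ b => Rs = [b]
  | _ => False
  end.

(* Invertibility of the left rules for ∧, ∨ and (in its right premise) →:
   the replacement principle with Gamma := Rs. *)
Lemma left_inversion (x : form) (Rs D : list form) (phi : form) :
  decomposes x Rs -> x :: D ⊢ phi -> Rs ++ D ⊢ phi.
Proof.
  intros Hx H. apply (replacement x); try exact H;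
    intros; subst x; simpl in Hx; try contradiction.
  all: destruct Hx as [-> | ->] || subst Rs; assumption.
Qed.

Definition contractible (x : form) : Prop :=
  forall G phi, x :: x :: G ⊢ phi -> x :: G ⊢ phi.

Lemma contract_list (Rs G : list form) (phi : form) :
  Forall contractible Rs -> Rs ++ Rs ++ G ⊢ phi -> Rs ++ G ⊢ phi.
Proof.
  intros HR. revert G. induction HR as [| x Rs Hx _ IH]; intros G H; [exact H |].
  reorder (Rs ++ x :: G). apply IH.
  reorder (x :: Rs ++ Rs ++ G). apply Hx.
  reorder ((x :: Rs) ++ (x :: Rs) ++ G). exact H.
Qed.

(* Principal case of contraction: the premise Rs ++ K of a left rule for x
   still contains the second copy of x; invert it and contract the Rs. *)
Lemma contract_decomposed (x : form) (Rs K G : list form) (phi : form) :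
  decomposes x Rs -> Forall contractible Rs -> Permutation K (x :: G) ->
  Rs ++ K ⊢ phi -> Rs ++ G ⊢ phi.
Proof.
  intros Hx HR HK H. apply contract_list; [exact HR |].
  apply (left_inversion x); [exact Hx |]. reorder (Rs ++ K). exact H.
Qed.

Lemma contraction_step (x : form) :
  (forall Rs, decomposes x Rs -> Forall contractible Rs) -> contractible x.
Proof.
  intros Hsub G0 phi0 H0.
  enough (Hgen : forall L phi, L ⊢ phi ->
            forall G, Permutation L (x :: x :: G) -> x :: G ⊢ phi)
    by (apply (Hgen _ _ H0); reflexivity).
  induction 1 as [G G' phi HG _ IH | G p | G | G a b _ IH
    | G a b phi _ IHa Hb IHb | G a b _ IHa _ IHb | G a b phi Hab IH
    | G a b _ IH | G a b _ IH | G a b phi Ha IHa Hb IHb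
    | G a b Hn _ IHa _ IHb | G a b Hnef _ IH | G a b Hcopc _ IH | G a Han _ IH];
    intros D HD.
  - apply IH. now transitivity G'.
  - destruct (perm_cons_double _ _ _ _ HD) as [[<- _] | [K [_ HK]]].
    + apply d_ax.
    + reorder (Var p :: x :: K). apply d_ax.
  - apply d_top.
  - apply d_impR. reorder (x :: a :: D). apply IH. perm_solve.
  - destruct (perm_cons_double _ _ _ _ HD) as [[<- HG] | [K [HG HK]]].
    + apply d_impL; [apply IHa; perm_solve |].
      apply (contract_decomposed (Imp a b) [b] G);
        [reflexivity | apply Hsub; reflexivity | exact HG | exact Hb].
    + reorder (Imp a b :: x :: K). apply d_impL.
      * reorder (x :: Imp a b :: K). apply IHa. perm_solve.
      * reorder (x :: b :: K). apply IHb. perm_solve.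
  - apply d_andR; [apply IHa | apply IHb]; exact HD.
  - destruct (perm_cons_double _ _ _ _ HD) as [[<- HG] | [K [HG HK]]].
    + apply d_andL, (contract_decomposed (And a b) [a; b] G);
        [reflexivity | apply Hsub; reflexivity | exact HG | exact Hab].
    + reorder (And a b :: x :: K). apply d_andL.
      reorder (x :: a :: b :: K). apply IH. perm_solve.
  - apply d_orR1, IH, HD.
  - apply d_orR2, IH, HD.
  - destruct (perm_cons_double _ _ _ _ HD) as [[<- HG] | [K [HG HK]]].
    + apply d_orL.
      * apply (contract_decomposed (Or a b) [a] G);
          [now left | apply Hsub; now left | exact HG | exact Ha].
      * apply (contract_decomposed (Or a b) [b] G);
          [now right | apply Hsub; now right | exact HG | exact Hb].
    + reorder (Or a b :: x :: K). apply d_orL.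
      * reorder (x :: a :: K). apply IHa. perm_solve.
      * reorder (x :: b :: K). apply IHb. perm_solve.
  - destruct (perm_cons_double _ _ _ _ HD) as [[<- HG] | [K [HG HK]]].
    + apply d_n; [assumption | |].
      * reorder (Neg a :: b :: D). apply IHa. perm_solve.
      * reorder (Neg a :: a :: D). apply IHb. perm_solve.
    + reorder (Neg a :: x :: K). apply d_n; [assumption | |].
      * reorder (x :: b :: Neg a :: K). apply IHa. perm_solve.
      * reorder (x :: a :: Neg a :: K). apply IHb. perm_solve.
  - destruct (perm_cons_double _ _ _ _ HD) as [[<- HG] | [K [HG HK]]].
    + apply d_nef; [assumption |]. apply IH. perm_solve.
    + reorder (Neg a :: x :: K). apply d_nef; [assumption |].
      reorder (x :: Neg a :: K). apply IH. perm_solve.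
  - destruct (perm_cons_double _ _ _ _ HD) as [[<- HG] | [K [HG HK]]].
    + apply d_copc; [assumption |]. reorder (Neg a :: b :: D). apply IH. perm_solve.
    + reorder (Neg a :: x :: K). apply d_copc; [assumption |].
      reorder (x :: b :: Neg a :: K). apply IH. perm_solve.
  - apply d_an; [assumption |]. reorder (x :: a :: D). apply IH. perm_solve.
Qed.

Lemma contraction : forall x, contractible x.
Proof.
  induction x; apply contraction_step; intros Rs HRs; simpl in HRs;
    try contradiction; try destruct HRs as [-> | ->]; try subst Rs; auto.
Qed.

Lemma derivable_incl (G L : list form) (phi : form) : incl G L -> G ⊢ phi -> L ⊢ phi.
Proof.
  intros HGL H.
  assert (Habsorb : forall M, incl M L -> M ++ L ⊢ phi -> L ⊢ phi).
  { induction M as [| x M IH]; intros HM HML; [exact HML |].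
    apply IH; [intros y Hy; apply HM; now right |].
    destruct (in_split x L (HM x (or_introl eq_refl))) as [L1 [L2 ->]].
    reorder (x :: M ++ L1 ++ L2). apply contraction.
    reorder ((x :: M) ++ L1 ++ x :: L2). exact HML. }
  apply (Habsorb G HGL), weakening_app, H.
Qed.

Ltac enlarge L := apply (derivable_incl L); [incl_solve |].

(* Closes a goal whose hypotheses require two negation rules of the two
   families (n, nef) and (copc, an), which never occur in the same system. *)
Ltac rule_clash := intros; exfalso; destruct sys; discriminate.

Definition cut_admissible (alpha : form) : Prop :=
  forall G D phi, G ⊢ alpha -> alpha :: D ⊢ phi -> G ++ D ⊢ phi.

Definition subformula_cuts (alpha : form) : Prop :=
  match alpha with
  | And a b | Or a b | Imp a b => cut_admissible a /\ cut_admissible b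
  | Neg a => cut_admissible a
  | _ => True
  end.

(* An axiom: alpha already occurs in G. *)
Lemma cut_left_ax (p : nat) (G D : list form) (phi : form) :
  Var p :: D ⊢ phi -> (Var p :: G) ++ D ⊢ phi.
Proof. apply derivable_incl. incl_solve. Qed.

(* ⊤ is never principal in an antecedent, so it can be dropped. *)
Lemma cut_left_top (G D : list form) (phi : form) : Top :: D ⊢ phi -> G ++ D ⊢ phi.
Proof. intros H. apply (replacement Top); try (intros; discriminate). exact H. Qed.

(* Principal →: cut on the antecedent a, then on the consequent b. *)
Lemma cut_left_impR (a b : form) (G D : list form) (phi : form) :
  cut_admissible a -> cut_admissible b ->
  a :: G ⊢ b -> Imp a b :: D ⊢ phi -> G ++ D ⊢ phi.
Proof.
  intros Ca Cb Hab H. apply (replacement (Imp a b)); try (intros; discriminate);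
    [| exact H].
  intros a' b' D' psi E Ha Hb. injection E as <- <-.
  enlarge (((G ++ D') ++ G) ++ D'). apply Cb; [apply Ca |]; assumption.
Qed.

(* Principal ∧: invert the right premise and cut on both components. *)
Lemma cut_left_andR (a b : form) (G D : list form) (phi : form) :
  cut_admissible a -> cut_admissible b ->
  G ⊢ a -> G ⊢ b -> And a b :: D ⊢ phi -> G ++ D ⊢ phi.
Proof.
  intros Ca Cb Ha Hb H.
  pose proof (left_inversion (And a b) [a; b] D phi eq_refl H) as Hab.
  enlarge (G ++ G ++ D). apply (Cb _ _ _ Hb).
  enlarge (G ++ b :: D). exact (Ca _ _ _ Ha Hab).
Qed.

(* Principal ∨: invert the right premise and cut on the chosen disjunct c. *)
Lemma cut_left_orR (a b c : form) (G D : list form) (phi : form) :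
  c = a \/ c = b -> cut_admissible c ->
  G ⊢ c -> Or a b :: D ⊢ phi -> G ++ D ⊢ phi.
Proof.
  intros Hc Cc Hcd H. apply (Cc _ _ _ Hcd), (left_inversion (Or a b) [c]); [| exact H].
  destruct Hc as [-> | ->]; [now left | now right].
Qed.

Lemma cut_left_n (a c : form) (G D : list form) (phi : form) :
  has_n sys = true -> cut_admissible a ->
  a :: Neg c :: G ⊢ c -> c :: Neg c :: G ⊢ a ->
  Neg a :: D ⊢ phi -> (Neg c :: G) ++ D ⊢ phi.
Proof.
  intros Hn Ca Hc Ha H. apply (replacement (Neg a)); try (intros; discriminate);
    [| | rule_clash | exact H].
  - intros a' b D' _ E Hb1 Hb2. injection E as <-. simpl. apply d_n; [exact Hn | |].
    + enlarge (((Neg c :: G) ++ b :: D') ++ Neg c :: G). exact (Ca _ _ _ Hb1 Hc).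
    + enlarge ((c :: Neg c :: G) ++ (Neg c :: G) ++ D'). apply (Ca _ _ _ Ha).
      enlarge ((Neg c :: G) ++ a :: D'). exact Hb2.
  - intros a' b D' Hnef E Hb. injection E as <-. simpl. apply d_nef; [exact Hnef |].
    enlarge (((Neg c :: G) ++ D') ++ Neg c :: G). exact (Ca _ _ _ Hb Hc).
Qed.

(* Rule nef on the left: any negation follows, whatever the right premise. *)
Lemma cut_left_nef (a c : form) (G D : list form) (phi : form) :
  has_nef sys = true -> Neg c :: G ⊢ c -> Neg a :: D ⊢ phi -> (Neg c :: G) ++ D ⊢ phi.
Proof.
  intros Hnef Hc H. apply (replacement (Neg a)); try (intros; discriminate); try exact H.
  all: intros; simpl; apply d_nef; [exact Hnef | exact (weakening_app _ _ _ Hc)].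
Qed.

Lemma cut_left_copc (a c : form) (G D : list form) (phi : form) :
  has_copc sys = true -> cut_admissible a ->
  a :: Neg c :: G ⊢ c -> Neg a :: D ⊢ phi -> (Neg c :: G) ++ D ⊢ phi.
Proof.
  intros Hcopc Ca Hc H. apply (replacement (Neg a)); try (intros; discriminate);
    [rule_clash | rule_clash | | exact H].
  intros a' b D' _ E _ Hb. injection E as <-. simpl. apply d_copc; [exact Hcopc |].
  enlarge (((Neg c :: G) ++ b :: D') ++ Neg c :: G). exact (Ca _ _ _ Hb Hc).
Qed.

(* Rule an on the left against copc on the right; IH is the cut with the
   premise a :: G ⊢ Neg a of the left derivation. *)
Lemma cut_left_an (a : form) (G D : list form) (phi : form) :
  has_an sys = true -> cut_admissible a ->
  (forall D' psi, Neg a :: D' ⊢ psi -> (a :: G) ++ D' ⊢ psi) ->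
  Neg a :: D ⊢ phi -> G ++ D ⊢ phi.
Proof.
  intros Han Ca IH H. apply (replacement (Neg a)); try (intros; discriminate);
    [rule_clash | rule_clash | | exact H].
  intros a' b D' Hcopc E Hraw Hb. injection E as <-. apply d_an; [exact Han |].
  enlarge ((G ++ b :: D') ++ G ++ D'). apply (Ca _ _ _ Hb).
  apply IH, d_copc; assumption.
Qed.

Lemma cut_step (alpha : form) : subformula_cuts alpha -> cut_admissible alpha.
Proof.
  intros Hsub G D phi HG. revert Hsub D phi.
  induction HG as [G G' alpha HG _ IH | G p | G | G a b Hab _
    | G a b alpha Ha _ _ IH | G a b Ha _ Hb _ | G a b alpha _ IH
    | G a b Ha _ | G a b Hb _ | G a b alpha _ IHa _ IHb
    | G c a Hn Hc _ Ha _ | G c a Hnef Hc _ | G c a Hcopc Hc _ | G a Han _ IH];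
    intros Hsub D phi H; simpl in Hsub.
  - apply (d_perm _ (G ++ D)); [now apply Permutation_app_tail | exact (IH Hsub D phi H)].
  - exact (cut_left_ax p G D phi H).
  - exact (cut_left_top G D phi H).
  - destruct Hsub as [Ca Cb]. exact (cut_left_impR a b G D phi Ca Cb Hab H).
  - apply d_impL; [exact (weakening_app D _ _ Ha) | exact (IH Hsub D phi H)].
  - destruct Hsub as [Ca Cb]. exact (cut_left_andR a b G D phi Ca Cb Ha Hb H).
  - apply d_andL. exact (IH Hsub D phi H).
  - apply (cut_left_orR a b a); [now left | apply Hsub | exact Ha | exact H].
  - apply (cut_left_orR a b b); [now right | apply Hsub | exact Hb | exact H].
  - apply d_orL; [exact (IHa Hsub D phi H) | exact (IHb Hsub D phi H)].
  - exact (cut_left_n a c G D phi Hn Hsub Hc Ha H).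
  - exact (cut_left_nef a c G D phi Hnef Hc H).
  - exact (cut_left_copc a c G D phi Hcopc Hsub Hc H).
  - exact (cut_left_an a G D phi Han Hsub (IH Hsub) H).
Qed.

Lemma cut_admissibility : forall alpha, cut_admissible alpha.
Proof. induction alpha; apply cut_step; simpl; auto. Qed.

End Structural.

Theorem theorem4p1 : forall (S : system) (Gamma Delta : list form) (alpha phi : form),
  derivable S Gamma alpha ->
  derivable S (alpha :: Delta) phi ->
  derivable S (Gamma ++ Delta) phi.
Proof.
  intros S Gamma Delta alpha phi Hleft Hright.
  exact (cut_admissibility S alpha Gamma Delta phi Hleft Hright).
Qed.
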